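(* Let $G$ be a bipartite graph with $p(G)=|V(G)|\ge 3$ vertices and $q(G)=|E(G)|\ge 2p(G)-2$ edges. Then $G$ is not bipartite Ramsey size linear.
   Context: For bipartite graphs $G_1,G_2$, the bipartite Ramsey number $\operatorname{br}(G_1,G_2)$ is the smallest integer $N$ such that every red/blue coloring of the edges of $K_{N,N}$ contains a red copy of $G_1$ or a blue copy of $G_2$. A bipartite graph $H$ is called bipartite Ramsey size linear if there exists a constant $C$ such that for every bipartite graph $G'$ with $m$ edges and no isolated vertices, $\operatorname{br}(H,G')\le C\cdot m$. *)

From mathcomp Require Import all_boot.
Set Implicit Arguments. Unset Strict Implicit. Unset Printing Implicit Defensive.

Definition simple_graph (V : finType) (E : rel V) : Prop :=
  symmetric E /\ irreflexive E.

Definition bipartite (V : finType) (E : rel V) : Prop :=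
  exists side : V -> bool, forall u v, E u v -> side u != side v.

Definition edge_set (V : finType) (E : rel V) : {set {set V}} :=
  [set A : {set V} | [exists u, exists v, E u v && (A == [set u; v])]].

Definition num_edges (V : finType) (E : rel V) : nat := #|edge_set E|.

Definition no_isolated (V : finType) (E : rel V) : Prop :=
  forall u, exists v, E u v.

(* K_{N,N}: vertices 'I_N + 'I_N (two sides), edges between the sides.
   A red/blue colouring is c : 'I_N -> 'I_N -> bool, with c i j = true
   meaning the edge (left i, right j) is red. *)
Definition KNN_col (N : nat) (c : 'I_N -> 'I_N -> bool) (red : bool)
  (x y : 'I_N + 'I_N) : bool :=
  match x, y with
  | inl i, inr j => c i j == red
  | inr j, inl i => c i j == red
  | _, _ => false
  end.

Definition has_copy (V : finType) (E : rel V) (N : nat)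
  (c : 'I_N -> 'I_N -> bool) (red : bool) : Prop :=
  exists f : V -> 'I_N + 'I_N,
    injective f /\ forall u v, E u v -> KNN_col c red (f u) (f v).

Definition br_prop (V1 : finType) (E1 : rel V1) (V2 : finType) (E2 : rel V2)
  (N : nat) : Prop :=
  forall c : 'I_N -> 'I_N -> bool, has_copy E1 c true \/ has_copy E2 c false.

Definition is_br (V1 : finType) (E1 : rel V1) (V2 : finType) (E2 : rel V2)
  (N : nat) : Prop :=
  br_prop E1 E2 N /\ forall M, M < N -> ~ br_prop E1 E2 M.

(* H is bipartite Ramsey size linear. (A natural-number constant C is
   equivalent to a real one by taking ceilings.) *)
Definition br_size_linear (V : finType) (E : rel V) : Prop :=
  exists C : nat,
    forall (V' : finType) (E' : rel V'),
      simple_graph E' -> bipartite E' -> no_isolated E' ->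
      exists N, is_br E E' N /\ N <= C * num_edges E'.

From mathcomp Require Import all_boot all_order all_algebra.
From mathcomp Require Import ring lra zify.
Set Implicit Arguments. Unset Strict Implicit. Unset Printing Implicit Defensive.
Import Order.TTheory GRing.Theory Num.Theory.

(* Suppose br(G, H) <= C q(H) for every H, and take H = K_{n,n}: it suffices to
   colour K_{N,N} with N > C n^2 so that there is neither a red G nor a blue
   K_{n,n}. Colour each edge red independently with probability 1/k. A red copy of
   G has probability at most k^-q and shares an edge with at most p^4 (2N)^(p-2)
   other copies; a blue K_{n,n} has probability at most 2^(-n^2/k) and there are at
   most N^(2n) of them. The asymmetric Lovasz Local Lemma, with weights 2 k^-q and
   1/(4 N^(2n)), yields a good colouring once n^2/k beats n log N and k^(q-1) beats
   p^2 (2N)^(p-2). Take N about n^2 and k about n / log N, so that k^2 is about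
   N / log^2 N. The first condition holds, and so does the second because
   q - 1 >= 2(p-2) + 1: the spare factor k in k^(q-1) >= k^(2(p-2)) k absorbs the
   logarithms. All parameters are chosen as powers of two. *)

Section LocalLemma.
Local Open Scope ring_scope.
Variables (R : realFieldType) (Omega I : finType) (w : Omega -> R).
Hypothesis w_ge0 : forall c, 0 <= w c.

Definition prob (F : pred Omega) : R := \sum_(c | F c) w c.

Lemma prob_ge0 F : 0 <= prob F.
Proof. exact: sumr_ge0. Qed.

Lemma le_prob (F G : pred Omega) : (forall c, F c -> G c) -> prob F <= prob G.
Proof.
move=> FG; rewrite /prob [X in _ <= X](bigID F) /=.
rewrite [X in _ <= X + _](eq_bigl F) ?lerDl ?sumr_ge0 // => c.
by case Fc: (F c); rewrite ?andbF ?(FG _ Fc).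
Qed.

Variables (A : I -> pred Omega) (dep : rel I) (x : I -> R).

Definition avoid (S : {set I}) : pred Omega := [pred c | [forall j in S, ~~ A j c]].

Hypothesis x_ge0 : forall i, 0 <= x i.
Hypothesis x_le1 : forall i, x i <= 1.
Hypothesis prob_indep : forall i (S : {set I}), {in S, forall j, ~~ dep i j} ->
  prob [predI A i & avoid S] <= prob (A i) * prob (avoid S).
Hypothesis prob_event_le : forall i,
  prob (A i) <= x i * \prod_(j | dep i j && (j != i)) (1 - x j).

Lemma avoid_setU1 j (S : {set I}) :
  avoid (j |: S) =1 [predI avoid S & predC (A j)].
Proof.
move=> c /=; apply/forall_inP/andP => [h | [/forall_inP h Ajc] k].
  by split; [apply/forall_inP => k kS; apply: h; rewrite in_setU1 kS orbT |
             apply: h; rewrite setU11].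
by rewrite in_setU1 => /orP [/eqP -> // | /h].
Qed.

Lemma prob_avoid_setU1 j (S : {set I}) :
  prob [predI A j & avoid S] <= x j * prob (avoid S) ->
  (1 - x j) * prob (avoid S) <= prob (avoid (j |: S)).
Proof.
have -> : prob [predI A j & avoid S] = prob [predI avoid S & A j].
  by apply: eq_bigl => c; rewrite /= andbC.
have -> : prob (avoid S) = prob [predI avoid S & A j] + prob (avoid (j |: S)).
  by rewrite /prob (bigID (A j)) /=; congr (_ + _); apply: eq_bigl => c; rewrite avoid_setU1.
by lra.
Qed.

Lemma prob_avoid_setU n (S U : {set I}) :
  (forall (T : {set I}) j, (#|T| < n)%N -> j \notin T ->
     prob [predI A j & avoid T] <= x j * prob (avoid T)) ->
  [disjoint S & U] -> (#|S :|: U| <= n)%N ->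
  \prod_(j in U) (1 - x j) * prob (avoid S) <= prob (avoid (S :|: U)).
Proof.
move=> step; have [m] := ubnP #|U|; elim: m U => // m IH U /ltnSE Um dSU SUn.
have [-> | [j jU]] := set_0Vmem U; first by rewrite big_set0 mul1r setU0.
have dSU' : [disjoint S & U :\ j] by apply: disjointWr dSU; apply: subD1set.
have jSU' : j \notin S :|: U :\ j by rewrite in_setU in_setD1 eqxx (disjointFl dSU jU).
have eqSU : S :|: U = j |: (S :|: U :\ j) by rewrite setUCA setD1K.
have SU'n : (#|S :|: U :\ j| < n)%N.
  by apply: leq_trans SUn; rewrite eqSU cardsU1 jSU'.
rewrite eqSU in SUn *.
rewrite (big_setD1 j jU) /= -mulrA.
apply: le_trans (prob_avoid_setU1 (step _ _ SU'n jSU')).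
rewrite ler_wpM2l ?subr_ge0 // IH //; last exact: ltnW.
by rewrite (cardsD1 j U) jU in Um.
Qed.

Lemma prod_one_sub_le (P Q : pred I) : {subset P <= Q} ->
  \prod_(j | Q j) (1 - x j) <= \prod_(j | P j) (1 - x j).
Proof.
have x01 j : 0 <= 1 - x j <= 1 by rewrite subr_ge0 x_le1 gerBl x_ge0.
move=> PQ; rewrite (bigID P) /=.
rewrite [X in X * _ <= _](eq_bigl P); last first.
  by move=> j /=; case Pj: (P j); rewrite ?andbT ?andbF //; apply: PQ.
apply: ler_piMr; first by apply: prodr_ge0 => j _; case/andP: (x01 j).
by apply: prodr_ile1 => j _; apply: x01.
Qed.

Lemma prob_event_avoid_le n (T : {set I}) i : (#|T| < n)%N -> i \notin T ->
  prob [predI A i & avoid T] <= x i * prob (avoid T).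
Proof.
elim: n T i => // n IH T i /ltnSE Tn iT.
set S1 := [set j in T | dep i j]; set S2 := [set j in T | ~~ dep i j].
have eT : T = S2 :|: S1 by apply/setP => j; rewrite !inE; case: (j \in T); case: (dep i j).
have dS : [disjoint S2 & S1].
  by apply/pred0P => j; rewrite /= !inE; case: (dep i j); rewrite ?andbF.
have S2T : S2 \subset T by rewrite eT subsetUl.
have sub_dep : {subset mem S1 <= [pred j | dep i j && (j != i)]}.
  move=> j; rewrite !inE => /andP [jT ->] /=.
  by apply: contraNneq iT => <-.
apply: le_trans (_ : prob (A i) * prob (avoid S2) <= _).
  apply: le_trans (prob_indep (S := S2) _); last by move=> j; rewrite inE => /andP [].
  apply: le_prob => c /andP [Aic /forall_inP avT]; rewrite /= Aic.
  by apply/forall_inP => j /(subsetP S2T); apply: avT.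
apply: le_trans (_ : x i * (\prod_(j in S1) (1 - x j) * prob (avoid S2)) <= _).
  rewrite mulrA ler_wpM2r ?prob_ge0 //; apply: le_trans (prob_event_le i) _.
  by rewrite ler_wpM2l // (prod_one_sub_le sub_dep).
rewrite ler_wpM2l // [X in _ <= prob (avoid X)]eT (@prob_avoid_setU n) // -eT //.
Qed.

Lemma lovasz_local_lemma : \prod_i (1 - x i) * prob predT <= prob (avoid setT).
Proof.
have -> : prob predT = prob (avoid set0).
  by apply: eq_bigl => c; apply/esym/forall_inP => j; rewrite inE.
have -> : \prod_i (1 - x i) = \prod_(i in [set: I]) (1 - x i) by apply: eq_bigl => i; rewrite inE.
rewrite -{2}(set0U setT) (@prob_avoid_setU #|I|) ?disjoints_subset ?sub0set ?set0U ?cardsT //.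
by move=> T j; apply: prob_event_avoid_le.
Qed.

Lemma local_lemma_avoid_all : (forall i, x i < 1) -> 0 < prob predT ->
  exists c, forall i, ~~ A i c.
Proof.
move=> x_lt1 pos; have : 0 < prob (avoid setT).
  apply: lt_le_trans lovasz_local_lemma; rewrite mulr_gt0 //.
  by apply: prodr_gt0 => i _; rewrite subr_gt0.
case: (pickP (avoid setT)) => [c /forall_inP avc _ | none].
  by exists c => i; apply: avc; rewrite inE.
by rewrite /prob big_pred0 // ltxx.
Qed.

End LocalLemma.

Section BernoulliProduct.
Local Open Scope ring_scope.
Variables (R : realFieldType) (T : finType) (rho : R).
Hypotheses (rho_ge0 : 0 <= rho) (rho_le1 : rho <= 1).

Definition bern (b : bool) : R := if b then rho else 1 - rho.

Definition bern_wt (c : {ffun T -> bool}) : R := \prod_e bern (c e).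

Lemma bern_ge0 b : 0 <= bern b.
Proof. by move: rho_ge0 rho_le1; rewrite /bern; case: b => /=; lra. Qed.

Lemma bern_wt_ge0 c : 0 <= bern_wt c.
Proof. by apply: prodr_ge0 => e _; apply: bern_ge0. Qed.

Lemma sum_bern_wt : \sum_c bern_wt c = 1.
Proof.
rewrite /bern_wt -(bigA_distr_bigA (fun _ b => bern b)) /=.
by apply: big1 => e _; rewrite big_bool /=; ring.
Qed.

(* Flipping coordinate [e] preserves [Z] and the factors of the other coordinates,
   and exchanges the colourings with [c e = b] and those with [c e <> b]. *)
Lemma sum_bern_wt_fix1 (e : T) b (Z : pred {ffun T -> bool}) :
  (forall c c' : {ffun T -> bool}, {in predC1 e, c =1 c'} -> Z c = Z c') ->
  \sum_(c : {ffun T -> bool} | (c e == b) && Z c) bern_wt c =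
    bern b * \sum_(c | Z c) bern_wt c.
Proof.
move=> Zdep.
pose flip (c : {ffun T -> bool}) : {ffun T -> bool} :=
  [ffun e' => if e' == e then ~~ c e else c e'].
have flipK : involutive flip.
  by move=> c; apply/ffunP => e'; rewrite !ffunE; case: eqP => [->|]; rewrite ?eqxx ?negbK.
have flip_e c : flip c e = ~~ c e by rewrite ffunE eqxx.
have flip_off c : {in predC1 e, flip c =1 c} by move=> e' /negPf ne; rewrite ffunE ne.
pose rest (c : {ffun T -> bool}) := \prod_(e' | e' != e) bern (c e').
have wt_rest c : bern_wt c = bern (c e) * rest c by rewrite /bern_wt (bigD1 e).
have rest_flip c : rest (flip c) = rest c by apply: eq_bigr => e' ne; rewrite flip_off.
have sel c : Z (flip c) && ~~ (flip c e == b) = Z c && (c e == b).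
  by rewrite flip_e (Zdep _ _ (flip_off c)); case: (c e); case: b.
rewrite [in RHS](bigID (fun c : {ffun T -> bool} => c e == b)) /=.
rewrite [X in _ * (_ + X)](reindex_inj (can_inj flipK)) /= (eq_bigl _ _ sel).
rewrite -big_split mulr_sumr /= (eq_bigl (fun c => Z c && (c e == b))); last first.
  by move=> c; rewrite andbC.
apply: eq_bigr => c /andP [_ /eqP ce].
by rewrite !wt_rest rest_flip flip_e ce; case: (b) => /=; ring.
Qed.

Lemma sum_bern_wt_fix (D : {set T}) b (Z : pred {ffun T -> bool}) :
  (forall c c' : {ffun T -> bool}, {in ~: D, c =1 c'} -> Z c = Z c') ->
  \sum_(c : {ffun T -> bool} | [forall e in D, c e == b] && Z c) bern_wt c =
    bern b ^+ #|D| * \sum_(c | Z c) bern_wt c.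
Proof.
have [m] := ubnP #|D|; elim: m D => // m IH D /ltnSE Dm Zdep.
have [-> | [e eD]] := set_0Vmem D.
  rewrite cards0 mul1r; apply: eq_bigl => c.
  suff -> : [forall e in set0, c e == b] by [].
  by apply/forall_inP => e; rewrite inE.
have D'm : (#|D :\ e| < m)%N by rewrite (cardsD1 e D) eD in Dm.
rewrite (cardsD1 e D) eD exprS -mulrA -IH //; last first.
  move=> c c' cc'; apply: Zdep => e' e'D; apply: cc'.
  by move: e'D; rewrite !inE => /negPf ->; rewrite andbF.
rewrite -(@sum_bern_wt_fix1 e); last first.
  move=> c c' cc'; congr (_ && _); last first.
    apply: Zdep => e' e'D; apply: cc'; rewrite inE.
    by apply: contraTneq e'D => ->; rewrite inE negbK.
  apply: eq_forallb_in => e' /setD1P [e'e _].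
  by rewrite cc'.
apply: eq_bigl => c; rewrite andbA; congr (_ && _).
apply/forall_inP/andP => [h | [/eqP ce /forall_inP h] e' e'D].
  by split; [apply: h | apply/forall_inP => e' /setD1P [_]; apply: h].
by case: (eqVneq e' e) => [-> | e'e]; [rewrite ce | apply: h; rewrite !inE e'e].
Qed.

Lemma bern_local_lemma (I : finType) (active : pred I) (D : I -> {set T})
    (b : I -> bool) (x : I -> R) :
  (forall i, 0 <= x i) -> (forall i, x i < 1) ->
  (forall i, active i -> bern (b i) ^+ #|D i| <=
     x i * \prod_(j | ~~ [disjoint D i & D j] && (j != i)) (1 - x j)) ->
  exists c : {ffun T -> bool}, forall i, active i -> exists2 e, e \in D i & c e != b i.
Proof.
move=> x_ge0 x_lt1 x_bound.
pose A i := [pred c : {ffun T -> bool} | active i && [forall e in D i, c e == b i]].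
pose dep := [rel i j | ~~ [disjoint D i & D j]].
have prob_on i (Z : pred {ffun T -> bool}) :
    (forall c c' : {ffun T -> bool}, {in ~: D i, c =1 c'} -> Z c = Z c') ->
    prob bern_wt [predI A i & Z] = (active i)%:R * bern (b i) ^+ #|D i| * prob bern_wt Z.
  move=> Zdep; have [ai | nai] := boolP (active i).
    by rewrite mul1r -sum_bern_wt_fix //; apply: eq_bigl => c; rewrite /A /= ai.
  by rewrite !mul0r /prob big_pred0 // => c; rewrite /A /= (negPf nai).
have probA i : prob bern_wt (A i) = (active i)%:R * bern (b i) ^+ #|D i|.
  rewrite -[RHS]mulr1 -[X in _ * X]sum_bern_wt -prob_on //.
  by apply: eq_bigl => c; rewrite /= andbT.
have x_prod_ge0 i : 0 <= x i * \prod_(j | dep i j && (j != i)) (1 - x j).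
  by rewrite mulr_ge0 // prodr_ge0 // => j _; rewrite subr_ge0 ltW.
have [c avc] : exists c : {ffun T -> bool}, forall i, ~~ A i c.
  apply: (@local_lemma_avoid_all R _ I bern_wt bern_wt_ge0 A dep x x_ge0).
  - by move=> i; apply: ltW.
  - move=> i S Sindep; rewrite probA prob_on //.
    move=> c c' cc'; apply: eq_forallb_in => j jS; rewrite /A /=; congr (~~ (_ && _)).
    apply: eq_forallb_in => e eDj; congr (_ == _); apply: cc'.
    by rewrite inE (disjointFl (negbNE (Sindep j jS)) eDj).
  - move=> i; rewrite probA; case: (boolP (active i)) => ai; last by rewrite mul0r x_prod_ge0.
    by rewrite mul1r x_bound.
  - exact: x_lt1.
  - by rewrite /prob (eq_bigl predT) // sum_bern_wt ltr01.
by exists c => i ai; move: (avc i); rewrite /= ai /= negb_forall_in => /exists_inP.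
Qed.
End BernoulliProduct.

Section Estimates.
Local Open Scope ring_scope.
Variable R : realFieldType.

Lemma bernoulli_ineq (y : R) n : -1 <= y -> 1 + n%:R * y <= (1 + y) ^+ n.
Proof.
move=> y_ge; elim: n => [|n IH]; first by rewrite mul0r addr0.
have n_ge0 : 0 <= n%:R :> R by [].
rewrite exprS -natr1; apply: le_trans (_ : (1 + y) * (1 + n%:R * y) <= _).
  by nra.
by rewrite ler_wpM2l // -lerBlDl sub0r.
Qed.

Lemma one_sub_expr_ge (y : R) n : 0 <= y <= 1 -> 1 - n%:R * y <= (1 - y) ^+ n.
Proof.
case/andP => y_ge0 y_le1; have := @bernoulli_ineq (- y) n.
by rewrite mulrN; apply; lra.
Qed.

Lemma one_sub_inv_expr_le_half k : (0 < k)%N -> (1 - k%:R^-1) ^+ k <= 2^-1 :> R.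
Proof.
move=> k_gt0; set x : R := k%:R^-1.
have kx : k%:R * x = 1 by rewrite mulfV // pnatr_eq0 -lt0n.
have x_ge0 : 0 <= x by rewrite invr_ge0.
have x_le1 : x <= 1 by rewrite invf_le1 ?ler1n ?ltr0n.
have two_le : 2 <= (1 + x) ^+ k.
  by apply: le_trans (bernoulli_ineq k _); rewrite ?kx; lra.
have prod_le1 : (1 - x) ^+ k * (1 + x) ^+ k <= 1.
  by rewrite -exprMn exprn_ile1 //; nra.
have : 0 <= (1 - x) ^+ k by rewrite exprn_ge0 // subr_ge0.
by nra.
Qed.

Lemma one_sub_inv_expr_le k t : (0 < k)%N ->
  (1 - k%:R^-1) ^+ (k * t)%N <= (2 ^+ t)^-1 :> R.
Proof.
move=> k_gt0; rewrite exprM -exprVn.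
apply: lerXn2r; rewrite ?nnegrE ?one_sub_inv_expr_le_half ?invr_ge0 //.
by rewrite exprn_ge0 // subr_ge0 invf_le1 ?ler1n ?ltr0n.
Qed.

Lemma one_sub_inv4_expr_ge K m : (0 < K)%N -> (m <= K)%N ->
  3 / 4 <= (1 - (4 * K)%:R^-1) ^+ m :> R.
Proof.
move=> K_gt0 mK; set x : R := (4 * K)%:R^-1.
have x_ge0 : 0 <= x by rewrite invr_ge0.
have Kx : 4 * K%:R * x = 1 by rewrite -natrM mulfV // pnatr_eq0 -lt0n muln_gt0.
have mK' : m%:R <= K%:R :> R by rewrite ler_nat.
have K_ge1 : 1 <= K%:R :> R by rewrite ler1n.
have x01 : 0 <= x <= 1 by apply/andP; split; nra.
by apply: le_trans (one_sub_expr_ge m x01); nra.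
Qed.

Lemma red_event_bound (y z : R) m : 0 <= y -> 2 * y <= 1 ->
  8 * (m%:R * y) <= 1 -> 3 / 4 <= z -> y <= 2 * y * ((1 - 2 * y) ^+ m * z).
Proof.
move=> y_ge0 y_le my_le z_ge.
have : 3 / 4 <= (1 - 2 * y) ^+ m.
  have y01 : 0 <= 2 * y <= 1 by apply/andP; lra.
  by apply: le_trans (one_sub_expr_ge m y01); rewrite mulrA; lra.
move=> P_ge; have : 9 / 16 <= (1 - 2 * y) ^+ m * z by nra.
by nra.
Qed.

Lemma half_expr_le (y : R) L r : 0 <= y -> 2 * y <= 1 ->
  4 * (L%:R * y) <= 1 -> (2 ^+ r)^-1 <= (1 - 2 * y) ^+ (L * r)%N.
Proof.
move=> y_ge0 y_le Ly_le; rewrite exprM -exprVn.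
apply: lerXn2r; rewrite ?nnegrE ?invr_ge0 ?exprn_ge0 //; first lra.
have y01 : 0 <= 2 * y <= 1 by apply/andP; lra.
by apply: le_trans (one_sub_expr_ge L y01); rewrite mulrA; lra.
Qed.

Lemma blue_event_bound K t r (a z : R) : (0 < K)%N -> (16 * K * 2 ^ r <= 2 ^ t)%N ->
  (2 ^+ r)^-1 <= a -> 3 / 4 <= z -> (2 ^+ t)^-1 <= (4 * K)%:R^-1 * (a * z).
Proof.
move=> K_gt0 Kt a_ge z_ge.
have pos2r : 0 < 2 ^+ r :> R by rewrite exprn_gt0.
have posK : 0 < K%:R :> R by rewrite ltr0n.
have -> : (4 * K)%:R^-1 = 4 * (16 * K * 2 ^ r)%N%:R^-1 * 2 ^+ r :> R.
  by rewrite !natrM natrX; field; rewrite ?pnatr_eq0 ?gt_eqF.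
have two_t : (2 ^ t)%:R = 2 ^+ t :> R by rewrite natrX.
apply: le_trans (_ : (16 * K * 2 ^ r)%N%:R^-1 <= _).
  by rewrite -two_t lef_pV2 ?posrE ?ltr0n ?expn_gt0 ?muln_gt0 ?K_gt0 ?ler_nat ?expn_gt0.
have : 0 <= (16 * K * 2 ^ r)%N%:R^-1 :> R by rewrite invr_ge0.
have : 0 <= a by apply: le_trans a_ge; rewrite invr_ge0 ltW.
have : 2 ^+ r * (2 ^+ r)^-1 <= 2 ^+ r * a by rewrite ler_wpM2l // exprn_ge0.
rewrite mulfV ?lt0r_neq0 // => sa_ge1 a_ge0 u_ge0.
have : 3 / 4 <= 2 ^+ r * a * z by nra.
rewrite (_ : 4 / _ * _ * _ = 4 * (16 * K * 2 ^ r)%N%:R^-1 * (2 ^+ r * a * z)); last by ring.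
by nra.
Qed.
End Estimates.

Lemma card_bigcup_le (I T : finType) (r : seq I) (P : pred I) (F : I -> {set T}) :
  #|\bigcup_(i <- r | P i) F i| <= \sum_(i <- r | P i) #|F i|.
Proof.
elim: r => [|i r IH]; first by rewrite !big_nil cards0.
rewrite !big_cons; case: (P i) => //.
by apply: leq_trans (leq_card_setU _ _).1 _; rewrite leq_add2l.
Qed.

Lemma card_ffun_fixed2 (V W : finType) (u v : V) (a b : W) : u != v ->
  #|[set g : {ffun V -> W} | (g u == a) && (g v == b)]| <= #|W| ^ (#|V| - 2).
Proof.
move=> uv; set S := [set g | _].
pose h (g : {ffun V -> W}) : {ffun V -> W} :=
  [ffun y => if (y == u) || (y == v) then a else g y].
have h_inj : {in S &, injective h}.
  move=> g1 g2; rewrite !inE => /andP [/eqP g1u /eqP g1v] /andP [/eqP g2u /eqP g2v] e12.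
  apply/ffunP => y; have := congr1 (fun g : {ffun V -> W} => g y) e12; rewrite !ffunE.
  case: (eqVneq y u) => [-> _ | yu]; first by rewrite g1u g2u.
  by case: (eqVneq y v) => [-> _ | yv]; first by rewrite g1v g2v.
have cardD : #|~: [set u; v]| = #|V| - 2 by rewrite cardsCs setCK cards2 uv.
rewrite -(card_in_imset h_inj) -cardD -(card_pffun_on a _ (predT : pred W)).
apply/subset_leq_card/subsetP => _ /imsetP [g _ ->].
apply/pffun_onP; split=> // ; apply/subsetP => y; rewrite !inE ffunE.
by case: (y == u); case: (y == v); rewrite ?eqxx.
Qed.

Definition side (A B : Type) (z : A + B) : bool := if z is inl _ then true else false.

(* A crossing map embeds G into K_{N,N}, whose vertices are 'I_N + 'I_N; as in
   [KNN_col], an edge of K_{N,N} is the pair (left end, right end). *)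
Section CrossingMaps.
Variables (V : finType) (E : rel V) (M : nat).
Hypotheses (E_sym : symmetric E) (E_irr : irreflexive E).
Local Notation N := M.+1.
Local Notation W := ('I_N + 'I_N)%type.

Definition crossing (f : {ffun V -> W}) : bool :=
  injectiveb f && [forall u, forall v, E u v ==> (side (f u) != side (f v))].

Definition edge_image (f : {ffun V -> W}) : {set 'I_N * 'I_N} :=
  [set e | [exists u, exists v, [&& E u v, f u == inl e.1 & f v == inr e.2]]].

Lemma num_edges_le_edge_image f : crossing f -> num_edges E <= #|edge_image f|.
Proof.
case/andP => /injectiveP f_inj /forallP f_cross.
pose h (e : 'I_N * 'I_N) : {set V} := f @^-1: [set inl e.1; inr e.2].
apply: leq_trans (leq_imset_card h (edge_image f)); apply/subset_leq_card/subsetP => A.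
rewrite inE => /existsP [u /existsP [v /andP [Euv /eqP ->]]].
wlog [i fu] : u v Euv / exists i, f u = inl i.
  move=> base; case fu: (f u) => [i|j]; first by apply: (base u v) => //; exists i.
  rewrite setUC; apply: (base v u); first by rewrite E_sym.
  have := implyP (forallP (f_cross u) v) Euv; rewrite fu.
  by case: (f v) => // i _; exists i.
have [j fv] : exists j, f v = inr j.
  by have := implyP (forallP (f_cross u) v) Euv; rewrite fu; case: (f v) => // j; exists j.
apply/imsetP; exists (i, j).
  by rewrite inE; apply/existsP; exists u; apply/existsP; exists v; rewrite Euv fu fv !eqxx.
by apply/setP => y; rewrite !inE -fu -fv !(inj_eq f_inj).
Qed.

Definition lft (z : W) : 'I_N := if z is inl i then i else ord0.
Definition rgt (z : W) : 'I_N := if z is inr j then j else ord0.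

Lemma card_edge_image_le f : #|edge_image f| <= #|V| * #|V|.
Proof.
rewrite -card_prod -cardsT.
apply: leq_trans (leq_imset_card (fun uv : V * V => (lft (f uv.1), rgt (f uv.2))) setT).
apply/subset_leq_card/subsetP => -[i j].
rewrite inE => /existsP [u /existsP [v /and3P [_ /eqP fu /eqP fv]]].
by apply/imsetP; exists (u, v); rewrite ?inE //= fu fv.
Qed.

Lemma card_edge_image_mem e :
  #|[set g | e \in edge_image g]| <= #|V| * #|V| * (N + N) ^ (#|V| - 2).
Proof.
pose G (uv : V * V) := [set g : {ffun V -> W} | (g uv.1 == inl e.1) && (g uv.2 == inr e.2)].
apply: leq_trans (_ : #|\bigcup_(uv | E uv.1 uv.2) G uv| <= _).
  apply/subset_leq_card/subsetP => g; rewrite !inE.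
  case/existsP => u /existsP [v /and3P [Euv gu gv]].
  by apply/bigcupP; exists (u, v) => //; rewrite inE gu gv.
apply: leq_trans (card_bigcup_le _ _ _) _.
rewrite -card_prod -sum_nat_const big_mkcond /= leq_sum // => -[u v] _ /=.
case: ifP => // Euv; have -> : N + N = #|{: W}| by rewrite card_sum card_ord.
by apply: card_ffun_fixed2; apply: contraTneq Euv => /= ->; rewrite E_irr.
Qed.

Lemma card_edge_image_meet (D : {set 'I_N * 'I_N}) :
  #|[set g | ~~ [disjoint D & edge_image g]]| <=
    #|D| * (#|V| * #|V| * (N + N) ^ (#|V| - 2)).
Proof.
apply: leq_trans (_ : #|\bigcup_(e in D) [set g | e \in edge_image g]| <= _).
  apply/subset_leq_card/subsetP => g; rewrite inE => /pred0Pn [e /andP [eD eg]].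
  by apply/bigcupP; exists e => //; rewrite inE.
apply: leq_trans (card_bigcup_le _ _ _) _.
by rewrite -sum_nat_const leq_sum // => e _; apply: card_edge_image_mem.
Qed.
End CrossingMaps.

Section Grids.
Variables (N n : nat).

Definition grid (st : {ffun 'I_n -> 'I_N} * {ffun 'I_n -> 'I_N}) : {set 'I_N * 'I_N} :=
  [set (st.1 ij.1, st.2 ij.2) | ij : 'I_n * 'I_n].

Definition injective_pair (st : {ffun 'I_n -> 'I_N} * {ffun 'I_n -> 'I_N}) : bool :=
  injectiveb st.1 && injectiveb st.2.

Lemma card_grid_le st : #|grid st| <= n * n.
Proof. by apply: leq_trans (leq_imset_card _ _) _; rewrite ?cardsT card_prod card_ord. Qed.

Lemma card_grid st : injective_pair st -> #|grid st| = n * n.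
Proof.
case/andP => /injectiveP s_inj /injectiveP t_inj.
by rewrite card_imset ?cardsT ?card_prod ?card_ord // => -[i j] [i' j'] /= [/s_inj -> /t_inj ->].
Qed.
End Grids.

Section GoodColouring.
Local Open Scope ring_scope.
Variables (V : finType) (E : rel V) (M n k t r L : nat).
Hypotheses (E_sym : symmetric E) (E_irr : irreflexive E).
Local Notation N := M.+1.
Local Notation q := (num_edges E).
Local Notation through := (#|V| * #|V| * (N + N) ^ (#|V| - 2))%N.
Local Notation K := (N ^ n * N ^ n)%N.
Hypotheses (k_gt0 : (0 < k)%N) (kq_gt2 : (2 < k ^ q)%N).
Hypothesis red_sparse : (8 * (#|V| * #|V| * through) <= k ^ q)%N.
Hypotheses (kt_le : (k * t <= n * n)%N) (L_le : (4 * L <= k ^ q)%N).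
Hypothesis blue_sparse : (n * n * through <= L * r)%N.
Hypothesis blue_rare : (16 * K * 2 ^ r <= 2 ^ t)%N.

Local Notation Event := ({ffun V -> 'I_N + 'I_N} + {ffun 'I_n -> 'I_N} * {ffun 'I_n -> 'I_N})%type.

(* Event [i] occurs when [i] is active and every edge of [support i] has colour
   [side i]: red for the copies of G, blue for the grids. *)
Definition support (i : Event) : {set 'I_N * 'I_N} :=
  match i with inl f => edge_image E f | inr st => grid st end.

Definition active (i : Event) : bool :=
  match i with inl f => crossing E f | inr st => injective_pair st end.

Let rho : rat := k%:R^-1.
Let y : rat := (k ^ q)%:R^-1.
Let xb : rat := (4 * K)%:R^-1.
Let x (i : Event) : rat := if i is inl _ then 2 * y else xb.

Let meets i j := ~~ [disjoint support i & support j] && (j != i).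
Let deg_red i := #|[pred g | meets i (inl g)]|.
Let deg_blue i := #|[pred st | meets i (inr st)]|.

Lemma neighbour_prod i :
  \prod_(j | meets i j) (1 - x j) = (1 - 2 * y) ^+ deg_red i * (1 - xb) ^+ deg_blue i.
Proof. by rewrite big_sumType /=; congr (_ * _); rewrite -prodr_const; apply: eq_bigl. Qed.

Lemma deg_red_le i : (deg_red i <= #|support i| * through)%N.
Proof.
apply: leq_trans (card_edge_image_meet E_irr (support i)).
by apply/subset_leq_card/subsetP => g; rewrite !inE => /andP [].
Qed.

Lemma deg_blue_le i : (deg_blue i <= K)%N.
Proof. by apply: leq_trans (max_card _) _; rewrite card_prod card_ffun !card_ord. Qed.

Let rho_ge0 : 0 <= rho.
Proof. by rewrite invr_ge0. Qed.

Let rho_le1 : rho <= 1.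
Proof. by rewrite invf_le1 ?ler1n ?ltr0n. Qed.

Let y_ge0 : 0 <= y.
Proof. by rewrite invr_ge0. Qed.

Let mul_y_le1 m : (m <= k ^ q)%N -> m%:R * y <= 1.
Proof.
move=> mk; have kq_pos : 0 < (k ^ q)%:R :> rat by rewrite ltr0n (ltn_trans _ kq_gt2).
by rewrite ler_pdivrMr // mul1r ler_nat.
Qed.

Let two_y_lt1 : 2 * y < 1.
Proof.
have kq_pos : 0 < (k ^ q)%:R :> rat by rewrite ltr0n (ltn_trans _ kq_gt2).
by rewrite ltr_pdivrMr // mul1r ltr_nat.
Qed.

Let xb_ge3_4 m : (m <= K)%N -> 3 / 4 <= (1 - xb) ^+ m.
Proof. by apply: one_sub_inv4_expr_ge; rewrite muln_gt0 !expn_gt0. Qed.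

Lemma red_condition f : crossing E f ->
  bern rho true ^+ #|edge_image E f| <= 2 * y * \prod_(j | meets (inl f) j) (1 - x j).
Proof.
move=> f_cross; rewrite neighbour_prod /=.
apply: le_trans (_ : rho ^+ q <= _).
  by rewrite ler_wiXn2l ?rho_ge0 ?rho_le1 ?num_edges_le_edge_image.
rewrite exprVn -natrX; apply: red_event_bound.
- exact: y_ge0.
- exact: ltW two_y_lt1.
- rewrite mulrA -natrM mul_y_le1 // (leq_trans _ red_sparse) // leq_mul2l.
  by rewrite (leq_trans (deg_red_le _)) // leq_mul2r card_edge_image_le orbT.
- exact/xb_ge3_4/deg_blue_le.
Qed.

Lemma blue_condition st : injective_pair st ->
  bern rho false ^+ #|grid st| <= xb * \prod_(j | meets (inr st) j) (1 - x j).
Proof.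
move=> st_inj; rewrite neighbour_prod card_grid //=.
have rho'01 : 0 <= 1 - rho <= 1 by rewrite subr_ge0 rho_le1 gerBl rho_ge0.
apply: le_trans (_ : (1 - rho) ^+ (k * t)%N <= _).
  by case/andP: rho'01 => *; rewrite ler_wiXn2l.
apply: le_trans (one_sub_inv_expr_le _ t k_gt0) _; apply: blue_event_bound.
- by rewrite muln_gt0 !expn_gt0.
- exact: blue_rare.
- apply: le_trans (@half_expr_le _ y L r y_ge0 (ltW two_y_lt1) _) _.
    by rewrite mulrA -natrM mul_y_le1.
  rewrite ler_wiXn2l ?subr_ge0 ?gerBl ?mulr_ge0 ?y_ge0 ?(ltW two_y_lt1) //.
  apply: leq_trans (deg_red_le _) _; apply: leq_trans blue_sparse.
  by rewrite leq_mul2r card_grid_le orbT.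
- exact/xb_ge3_4/deg_blue_le.
Qed.

Lemma exists_good_colouring : exists c : {ffun 'I_N * 'I_N -> bool},
  (forall f, crossing E f -> exists2 e, e \in edge_image E f & ~~ c e) /\
  (forall st : {ffun 'I_n -> 'I_N} * {ffun 'I_n -> 'I_N},
     injective_pair st -> exists2 e, e \in grid st & c e).
Proof.
have x_ge0 i : 0 <= x i by case: i => [f | st] /=; rewrite ?mulr_ge0 ?y_ge0 ?invr_ge0.
have x_lt1 i : x i < 1.
  case: i => [f | st] /=; first exact: two_y_lt1.
  have K_gt0 : (0 < K)%N by rewrite muln_gt0 !expn_gt0.
  rewrite invf_lt1 ?ltr0n ?ltr1n; last by rewrite muln_gt0 K_gt0.
  exact: leq_trans (leq_pmulr 4 K_gt0).
have [|c good] := @bern_local_lemma _ _ rho rho_ge0 rho_le1 _ active support (@side _ _) x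
  x_ge0 x_lt1.
  case=> [f | st] /= act; [exact: red_condition | exact: blue_condition].
exists c; split=> [f /(good (inl f)) | st /(good (inr st))] [e De ce]; exists e => //.
  by move: ce; rewrite eqb_id.
by move: ce; rewrite eqbF_neg negbK.
Qed.
End GoodColouring.

Lemma exp2_ge_linear a b : exists u, a * u + b <= 2 ^ u.
Proof.
set v := (2 * a + b).+1; exists (2 * v).
have : v * v <= 2 ^ v * 2 ^ v by apply: leq_mul; apply/ltnW/ltn_expl.
by rewrite mul2n -addnn expnD; move: (2 ^ v) => X; rewrite /v; nia.
Qed.

Lemma ramsey_exponents P c C q : 2 * P + 2 <= q ->
  exists u b, b + 3 + c + (2 * (b + 1 + u) + C + 1) * P <= b * q /\
              2 * (2 * (b + 1 + u) + C) + 4 <= 2 ^ u.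
Proof.
move=> Pq; have [u u_ge] := exp2_ge_linear (8 * P + 4) (20 + 4 * c + 4 * (3 + C) * P + 2 * C).
set b := 3 + c + (3 + 2 * u + C) * P; exists u, b; split.
  have : b * (2 * P + 2) <= b * q by rewrite leq_mul2l Pq orbT.
  by rewrite /b; nia.
by apply: leq_trans u_ge; rewrite /b; nia.
Qed.

(* N = 2^a, n = 2^s, k = 2^b, t = n^2/k, r = t/2 and L = k^q/4. *)
Lemma ramsey_parameters p q C : 3 <= p -> 2 * p - 2 <= q ->
  exists M n k t r L,
    [/\ [/\ 0 < k, 2 < k ^ q, 8 * (p * p * (p * p * (M.+1 + M.+1) ^ (p - 2))) <= k ^ q,
          k * t <= n * n & 4 * L <= k ^ q],
        n * n * (p * p * (M.+1 + M.+1) ^ (p - 2)) <= L * r,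
        16 * (M.+1 ^ n * M.+1 ^ n) * 2 ^ r <= 2 ^ t,
        0 < n & C * (n * n) < M.+1].
Proof.
move=> p3 pq; set P := p - 2; set c := p * p * (p * p).
have [u [b [key u_big]]] := @ramsey_exponents P c C q (ltac:(rewrite /P; lia)).
set s := b + 1 + u in key u_big; set a := 2 * s + C in key u_big.
have bq2 : 2 <= b * q by rewrite /P in key; nia.
exists (2 ^ a).-1, (2 ^ s), (2 ^ b), (2 ^ (b + 2 + 2 * u)), (2 ^ (b + 1 + 2 * u)),
  (2 ^ (b * q - 2)).
rewrite prednK ?expn_gt0 // -expnM.
have p_ge1 : 1 <= p * p by rewrite muln_gt0 andbb (ltn_trans _ p3).
have through_le : p * p * (p * p * (2 ^ a + 2 ^ a) ^ P) <= 2 ^ (c + (a + 1) * P).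
  rewrite mulnA expnD leq_mul ?(ltnW (ltn_expl _ _)) //.
  by rewrite addnn -mul2n -expnS -expnM addn1.
split; first split.
- by [].
- by rewrite -{1}(expn1 2) ltn_exp2l //; lia.
- apply: leq_trans (_ : 2 ^ 3 * 2 ^ (c + (a + 1) * P) <= _); first by rewrite leq_mul2l through_le.
  by rewrite -expnD leq_exp2l //; lia.
- by rewrite -!expnD leq_exp2l //; lia.
- by rewrite -[4]/(2 ^ 2) -expnD leq_exp2l //; lia.
- apply: leq_trans (_ : 2 ^ (s + s) * 2 ^ (c + (a + 1) * P) <= _).
    by rewrite expnD leq_mul2l (leq_trans _ through_le) ?orbT ?leq_pmull.
  by rewrite -!expnD leq_exp2l //; lia.
- rewrite -[16]/(2 ^ 4) -!expnM -!expnD leq_exp2l //.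
  have -> : 2 ^ (b + 2 + 2 * u) = 2 ^ s * 2 ^ u + 2 ^ s * 2 ^ u.
    by rewrite addnn -mul2n -!expnD -expnS; congr (2 ^ _); rewrite /s; lia.
  have -> : 2 ^ (b + 1 + 2 * u) = 2 ^ s * 2 ^ u by rewrite -expnD; congr (2 ^ _); rewrite /s; lia.
  have : 1 <= 2 ^ s by rewrite expn_gt0.
  move: u_big; clearbody a; move: (2 ^ s) (2 ^ u) => X Y; nia.
- by [].
- have -> : 2 ^ s * 2 ^ s = 2 ^ (2 * s) by rewrite -expnD addnn mul2n.
  by rewrite /a expnD [C * _]mulnC ltn_pmul2l ?expn_gt0 //; apply: ltn_expl.
Qed.

Definition Knn (n : nat) : rel ('I_n + 'I_n) := fun x y => side x != side y.
Arguments Knn : clear implicits.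

Lemma Knn_simple n : simple_graph (Knn n).
Proof. by split=> [x y | x]; rewrite /Knn ?eqxx // eq_sym. Qed.

Lemma Knn_bipartite n : bipartite (Knn n).
Proof. by exists (@side _ _). Qed.

Lemma Knn_no_isolated n : no_isolated (Knn n).
Proof. by case=> x; [exists (inr x) | exists (inl x)]. Qed.

Lemma num_edges_Knn n : num_edges (Knn n) <= n * n.
Proof.
apply: leq_trans (_ : #|[set [set inl ij.1; inr ij.2] | ij : 'I_n * 'I_n]| <= _).
  apply/subset_leq_card/subsetP => A; rewrite inE => /existsP [u /existsP [v /andP [Kuv /eqP ->]]].
  apply/imsetP; case: u v Kuv => [i|j] [i'|j'] // _; first by exists (i, j').
  by exists (i', j); rewrite // setUC.
by apply: leq_trans (leq_imset_card _ _) _; rewrite ?cardsT card_prod card_ord.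
Qed.

Lemma KNN_col_crossing N (c : 'I_N -> 'I_N -> bool) b x y :
  KNN_col c b x y -> side x != side y.
Proof. by case: x y => x [] y. Qed.

Lemma oriented_Knn_copy n N (c : 'I_N -> 'I_N -> bool) b : 0 < n ->
  has_copy (Knn n) c b ->
  exists f : 'I_n + 'I_n -> 'I_N + 'I_N,
    [/\ injective f, forall u v, Knn n u v -> KNN_col c b (f u) (f v),
        forall i, side (f (inl i)) & forall j, ~~ side (f (inr j))].
Proof.
move=> n_gt0 [f [f_inj f_col]]; pose o := Ordinal n_gt0.
have crossing_sides g : (forall u v, Knn n u v -> KNN_col c b (g u) (g v)) ->
    forall i j, side (g (inl i)) != side (g (inr j)).
  by move=> g_col i j; exact: KNN_col_crossing (g_col (inl i) (inr j) isT).
wlog left_o : f f_inj f_col / side (f (inl o)).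
  move=> base; case lo: (side (f (inl o))); first exact: (base f).
  pose sw (z : 'I_n + 'I_n) := match z with inl i => inr i | inr j => inl j end.
  have swK : involutive sw by case.
  apply: (base (f \o sw)) => [|u v|] /=.
  - exact: inj_comp f_inj (can_inj swK).
  - by move=> Kuv; apply: f_col; case: u v Kuv => u [] v.
  - by have := crossing_sides _ f_col o o; rewrite lo; case: side.
have f_right j : ~~ side (f (inr j)).
  by have := crossing_sides _ f_col o j; rewrite left_o; case: side.
exists f; split=> // i.
by have := crossing_sides _ f_col i o; move: (f_right o); do 2!case: side.
Qed.

Section Restriction.
Variables (V : finType) (E : rel V) (M n N' : nat).
Hypothesis N'_le : N' <= M.+1.
Variable c : {ffun 'I_M.+1 * 'I_M.+1 -> bool}.
Hypothesis red_free : forall f, crossing E f -> exists2 e, e \in edge_image E f & ~~ c e.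
Hypothesis blue_free : forall st : {ffun 'I_n -> 'I_M.+1} * {ffun 'I_n -> 'I_M.+1},
  injective_pair st -> exists2 e, e \in grid st & c e.

Local Notation widen := (widen_ord N'_le).

Definition restricted_colouring (i j : 'I_N') : bool := c (widen i, widen j).

Definition widen_sum (z : 'I_N' + 'I_N') : 'I_M.+1 + 'I_M.+1 :=
  match z with inl x => inl (widen x) | inr y => inr (widen y) end.

Lemma widen_inj : injective widen.
Proof. by move=> i j [] /val_inj. Qed.

Lemma widen_sum_inj : injective widen_sum.
Proof. by case=> x; case=> y //= [] /val_inj ->. Qed.

Lemma no_red_copy : ~ has_copy E restricted_colouring true.
Proof.
case=> f [f_inj f_col]; pose g := [ffun u => widen_sum (f u)].
have g_cross : crossing E g.
  apply/andP; split.
    by apply/injectiveP => u v; rewrite !ffunE => /widen_sum_inj /f_inj.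
  apply/forallP => u; apply/forallP => v; apply/implyP => /f_col /KNN_col_crossing.
  by rewrite !ffunE; case: (f u) (f v) => x [] y.
have [[i j]] := red_free g_cross.
rewrite inE => /existsP [u /existsP [v /and3P [Euv]]]; rewrite !ffunE.
have := f_col u v Euv; case: (f u) (f v) => x [] y //= cxy /eqP [<-] /eqP [<-].
by move: cxy; rewrite /restricted_colouring => /eqP ->.
Qed.

Definition widen_left (z : 'I_N' + 'I_N') : 'I_M.+1 := if z is inl x then widen x else ord0.
Definition widen_right (z : 'I_N' + 'I_N') : 'I_M.+1 := if z is inr y then widen y else ord0.

Lemma no_blue_copy : 0 < n -> ~ has_copy (Knn n) restricted_colouring false.
Proof.
move=> n_gt0 /(oriented_Knn_copy n_gt0) [f [f_inj f_col f_left f_right]].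
have left_i i : exists x, f (inl i) = inl x.
  by move: (f_left i); case: (f (inl i)) => // x _; exists x.
have right_j j : exists y, f (inr j) = inr y.
  by move: (f_right j); case: (f (inr j)) => // y _; exists y.
pose s := [ffun i => widen_left (f (inl i))]; pose t := [ffun j => widen_right (f (inr j))].
have st_inj : injective_pair (s, t).
  apply/andP; split; apply/injectiveP => i i'; rewrite !ffunE.
    have [[x fx] [x' fx']] := (left_i i, left_i i'); rewrite fx fx' => /widen_inj xx'.
    have : f (inl i) = f (inl i') by rewrite fx fx' xx'.
    by move/f_inj => [].
  have [[y fy] [y' fy']] := (right_j i, right_j i'); rewrite fy fy' => /widen_inj yy'.
  have : f (inr i) = f (inr i') by rewrite fy fy' yy'.
  by move/f_inj => [].
have [_ /imsetP [[i j] _ ->] /=] := blue_free st_inj.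
rewrite !ffunE; have [x fx] := left_i i; have [y fy] := right_j j; rewrite fx fy /=.
by have := f_col (inl i) (inr j) isT; rewrite fx fy /= /restricted_colouring => /eqP ->.
Qed.

Lemma not_br_prop_restricted : 0 < n -> ~ br_prop E (Knn n) N'.
Proof. by move=> n_gt0 /(_ restricted_colouring) [/no_red_copy | /(no_blue_copy n_gt0)]. Qed.
End Restriction.

Unset Implicit Arguments.

Theorem mainTheorem2 (V : finType) (E : rel V) :
  simple_graph E -> bipartite E ->
  3 <= #|V| -> 2 * #|V| - 2 <= num_edges E ->
  ~ br_size_linear E.
Proof.
move=> [E_sym E_irr] _ p3 pq [C br_lin].
have [M [n [k [t [r [L [[k_gt0 kq_gt2 red_sparse kt_le L_le]
    blue_sparse blue_rare n_gt0 Cn]]]]]]] := ramsey_parameters C p3 pq.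
have [c [red_free blue_free]] := exists_good_colouring E_sym E_irr k_gt0 kq_gt2 red_sparse
  kt_le L_le blue_sparse blue_rare.
have [N [[brN _] N_le]] := br_lin _ _ (@Knn_simple n) (@Knn_bipartite n) (@Knn_no_isolated n).
have N_leM : N <= M.+1.
  apply: leq_trans N_le (ltnW (leq_ltn_trans _ Cn)).
  by rewrite leq_mul2l num_edges_Knn orbT.
exact: (not_br_prop_restricted N_leM red_free blue_free n_gt0 brN).
Qed.
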